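(* Let $(L,\vee,\wedge,\to,f,g,0,1)$ be a spatial HGC-algebra. Then there exists a GC-frame $\mathcal{F}=(X,\leq,R)$ such that $(L,\vee,\wedge,\to,f,g,0,1)$ is isomorphic to the complex algebra $\mathbb{H}_{\rm GC}(\mathcal{F})=(\mathcal{T}_\leq,\cup,\cap,\to,{}^\blacktriangle,{}^\blacktriangledown,\emptyset,X)$.
   Context: A pair $(f,g)$ of maps $f,g\colon L\to L$ on a lattice $L$ is an (order-preserving) Galois connection if for all $a,b\in L$: $f(a)\leq b \iff a\leq g(b)$. An HGC-algebra $(L,\vee,\wedge,\to,f,g,0,1)$ is a Heyting algebra $(L,\vee,\wedge,\to,0,1)$ (where $a\to b$ is the greatest $x$ with $a\wedge x\leq b$) equipped with an order-preserving Galois connection $(f,g)$ on $L$. An element $a$ of a complete lattice is completely join-irreducible if $a=\bigvee S$ implies $a\in S$ for every subset $S$; a complete lattice is spatial if every element is the join of the completely join-irreducible elements below it. An HGC-algebra is spatial if its underlying lattice is a spatial (in particular complete) lattice. A GC-frame $(X,\leq,R)$ is a set $X$ with a quasiorder (reflexive, transitive relation) $\leq$ and a binary relation $R\subseteq X\times X$ such that $x\leq x'$, $x\,R\,y$ and $y'\leq y$ imply $x'\,R\,y'$. For a quasiorder $\leq$ on $X$, $\mathcal{T}_\leq$ is the set of all subsets $B\subseteq X$ that are $\leq$-closed upward ($x\in B$, $x\leq y$ imply $y\in B$). For $A\subseteq X$: $A^\blacktriangle=\{x\in X\mid x\,R\,y \text{ for some } y\in A\}$ and $A^\blacktriangledown=\{x\in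 X\mid \text{for all } y,\ y\,R\,x \text{ implies } y\in A\}$. On $\mathcal{T}_\leq$, $A\to B=\{a\in X\mid \text{for all } b\geq a,\ b\in A \text{ implies } b\in B\}$. The complex algebra $\mathbb{H}_{\rm GC}(\mathcal{F})$ is $(\mathcal{T}_\leq,\cup,\cap,\to,{}^\blacktriangle,{}^\blacktriangledown,\emptyset,X)$; isomorphism means an isomorphism preserving $\vee,\wedge,\to,f,g,0,1$ (with $f$ corresponding to ${}^\blacktriangle$ and $g$ to ${}^\blacktriangledown$). *)

From HB Require Import structures.
From mathcomp Require Import all_boot all_order.
From mathcomp Require Import boolp classical_sets.
Set Implicit Arguments. Unset Strict Implicit. Unset Printing Implicit Defensive.
Import Order.Theory.

Section LatticeDefs.
Context {d : Order.disp_t} {L : tbLatticeType d}.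

Definition heyting_imp (imp : L -> L -> L) : Prop :=
  forall a b : L,
    (Order.meet a (imp a b) <= b)%O /\
    (forall x : L, (Order.meet a x <= b)%O -> (x <= imp a b)%O).

Definition galois_connection (f g : L -> L) : Prop :=
  forall a b : L, (f a <= b)%O <-> (a <= g b)%O.

Definition HGC_algebra (imp : L -> L -> L) (f g : L -> L) : Prop :=
  heyting_imp imp /\ galois_connection f g.

Definition is_join (S : set L) (a : L) : Prop :=
  (forall s, S s -> (s <= a)%O) /\
  (forall u, (forall s, S s -> (s <= u)%O) -> (a <= u)%O).

Definition complete_lattice : Prop :=
  forall S : set L, exists a, is_join S a.

Definition completely_join_irreducible (a : L) : Prop :=
  forall S : set L, is_join S a -> S a.

Definition spatial : Prop :=
  complete_lattice /\
  forall a : L,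
    is_join [set j | completely_join_irreducible j /\ (j <= a)%O] a.

End LatticeDefs.

Section FrameDefs.
Context {X : Type}.

Definition quasiorder (le : X -> X -> Prop) : Prop :=
  (forall x, le x x) /\ (forall x y z, le x y -> le y z -> le x z).

Definition GC_frame (le R : X -> X -> Prop) : Prop :=
  quasiorder le /\
  (forall x x' y y', le x x' -> R x y -> le y' y -> R x' y').

Definition upset (le : X -> X -> Prop) (B : set X) : Prop :=
  forall x y, B x -> le x y -> B y.

Definition up_tri (R : X -> X -> Prop) (A : set X) : set X :=
  [set x | exists y, R x y /\ A y].

Definition down_tri (R : X -> X -> Prop) (A : set X) : set X :=
  [set x | forall y, R y x -> A y].

Definition frame_imp (le : X -> X -> Prop) (A B : set X) : set X :=
  [set a | forall b, le a b -> A b -> B b].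

End FrameDefs.

Definition HGC_iso {d : Order.disp_t} {L : tbLatticeType d} {X : Type}
  (imp : L -> L -> L) (f g : L -> L) (le R : X -> X -> Prop)
  (phi : L -> set X) : Prop :=
  (forall a, upset le (phi a)) /\
  injective phi /\
  (forall B : set X, upset le B -> exists a, phi a = B) /\
  (forall a b, phi (Order.join a b) = setU (phi a) (phi b)) /\
  (forall a b, phi (Order.meet a b) = setI (phi a) (phi b)) /\
  (forall a b, phi (imp a b) = frame_imp le (phi a) (phi b)) /\
  (forall a, phi (f a) = up_tri R (phi a)) /\
  (forall a, phi (g a) = down_tri R (phi a)) /\
  phi Order.bottom = set0 /\
  phi Order.top = setT.

From HB Require Import structures.
From mathcomp Require Import all_boot all_order.
From mathcomp Require Import boolp classical_sets.
Import Order.Theory.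
Local Open Scope order_scope.

(* Points are the completely join-irreducible elements, ordered by the reverse
   of the lattice order, with x R y iff x <= f y; a is sent to the set of points
   below it, which spatiality makes injective.  In a Heyting algebra meets
   distribute over arbitrary joins, so a completely join-irreducible element
   below a join lies below one of its members.  Applied to binary joins, to the
   join of the points of an upset, and to f of a join (a left adjoint preserves
   joins), this gives preservation of joins, surjectivity onto the upsets and
   preservation of f. *)

Section HeytingJoins.
Context {d : Order.disp_t} {L : tbLatticeType d} {imp : L -> L -> L}.
Hypothesis imp_adj : heyting_imp imp.

Lemma is_join_meetl (a : L) {S : set L} {b : L} :
  is_join S b -> is_join [set y | exists2 s, S s & y = a `&` s] (a `&` b).
Proof.
move=> [ub least]; split.
  by move=> y [s Ss ->]; rewrite lexI leIl /= (le_trans (leIr _ _) (ub _ Ss)).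
move=> u ubu.
have b_le_imp : b <= imp a u.
  by apply: least => s Ss; apply: (proj2 (imp_adj a u)); apply: ubu; exists s.
apply: le_trans (proj1 (imp_adj a u)).
by rewrite lexI leIl /= (le_trans (leIr _ _) b_le_imp).
Qed.

Lemma cji_le_join {x : L} {S : set L} {b : L} :
  completely_join_irreducible x -> is_join S b -> x <= b ->
  exists2 s, S s & x <= s.
Proof.
move=> cji_x joinS /meet_idPl xb.
have := is_join_meetl x joinS; rewrite xb => /cji_x [s Ss sE].
by exists s => //; apply/meet_idPl; rewrite -sE.
Qed.

End HeytingJoins.

Section GaloisConnection.
Context {d : Order.disp_t} {L : tbLatticeType d} {f g : L -> L}.
Hypothesis fg_adj : galois_connection f g.

Lemma gc_homo_le {s t : L} : s <= t -> f s <= f t.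
Proof.
move=> st; apply/(proj2 (fg_adj s (f t))).
by apply: le_trans st _; apply/(proj1 (fg_adj t (f t))).
Qed.

Lemma gc_is_join {S : set L} {a : L} :
  is_join S a -> is_join [set y | exists2 s, S s & y = f s] (f a).
Proof.
move=> [ub least]; split; first by move=> y [s Ss ->]; apply/gc_homo_le/ub.
move=> u ubu; apply/(proj2 (fg_adj a u)); apply: least => s Ss.
by apply/(proj1 (fg_adj s u)); apply: ubu; exists s.
Qed.

End GaloisConnection.

Section CanonicalFrame.
Context {d : Order.disp_t} {L : tbLatticeType d}.
Variables (imp : L -> L -> L) (f g : L -> L).
Hypotheses (imp_adj : heyting_imp imp) (fg_adj : galois_connection f g).
Hypothesis spatialL : spatial (L := L).

Definition cji_point := {j : L | completely_join_irreducible j}.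

Definition cji_le (x y : cji_point) : Prop := sval y <= sval x.

Definition cji_rel (x y : cji_point) : Prop := sval x <= f (sval y).

Definition cji_below (a : L) : set cji_point := [set x | sval x <= a].

Lemma cji_GC_frame : GC_frame cji_le cji_rel.
Proof.
split; first by split=> [x|x y z xy yz]; [exact: lexx | exact: le_trans yz xy].
move=> x x' y y' xx' xy y'y; apply: le_trans xx' (le_trans xy _).
by apply: (gc_homo_le fg_adj); apply: y'y.
Qed.

Lemma le_of_cji_below (a b : L) :
  (forall x : cji_point, sval x <= a -> sval x <= b) -> a <= b.
Proof.
by move=> sub; apply: (spatialL.2 a).2 => s [cji_s]; apply: (sub (exist _ s cji_s)).
Qed.

Lemma cji_below_upset (a : L) : upset cji_le (cji_below a).
Proof. by move=> x y xa yx; apply: le_trans yx xa. Qed.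

Lemma cji_below_inj : injective cji_below.
Proof.
have sub a b : cji_below a = cji_below b -> a <= b.
  by move=> E; apply: le_of_cji_below => x xa; have : cji_below b x by rewrite -E.
by move=> a b E; apply/le_anti; rewrite sub // sub.
Qed.

Lemma cji_below_onto (B : set cji_point) :
  upset cji_le B -> exists a, cji_below a = B.
Proof.
move=> upB; have [a joinB] := spatialL.1 (sval @` B)%classic.
exists a; apply/seteqP; split=> [x xa | x Bx]; last by apply: joinB.1; exists x.
have [_ [y By <-] xy] := cji_le_join imp_adj (svalP x) joinB xa.
exact: upB _ _ By xy.
Qed.

Lemma cji_belowU (a b : L) :
  cji_below (a `|` b) = setU (cji_below a) (cji_below b).
Proof.
apply/seteqP; split=> [x xab | x [xa|xb]]; last 2 first.
- by apply: le_trans xa (leUl _ _).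
- by apply: le_trans xb (leUr _ _).
have joinab : is_join [set y | y = a \/ y = b]%classic (a `|` b).
  split=> [y [->|->]|u ubu]; [exact: leUl | exact: leUr |].
  by rewrite leUx (ubu a (or_introl erefl)) (ubu b (or_intror erefl)).
by have [s [->|->] xs] := cji_le_join imp_adj (svalP x) joinab xab; [left|right].
Qed.

Lemma cji_belowI (a b : L) :
  cji_below (a `&` b) = setI (cji_below a) (cji_below b).
Proof. by apply/seteqP; split=> x; rewrite /cji_below /= lexI => /andP. Qed.

Lemma cji_below_imp (a b : L) :
  cji_below (imp a b) = frame_imp cji_le (cji_below a) (cji_below b).
Proof.
apply/seteqP; split=> [x x_imp y yx ya | x x_imp].
  by apply: le_trans (proj1 (imp_adj a b)); rewrite lexI ya (le_trans yx x_imp).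
apply: (proj2 (imp_adj a b)); apply: le_of_cji_below => y.
by rewrite lexI => /andP[ya yx]; apply: x_imp.
Qed.

Lemma cji_below_f (a : L) : cji_below (f a) = up_tri cji_rel (cji_below a).
Proof.
apply/seteqP; split=> [x xfa | x [y [xy ya]]]; last first.
  exact: le_trans xy (gc_homo_le fg_adj ya).
have [_ [s [cji_s sa] ->] xfs] :=
  cji_le_join imp_adj (svalP x) (gc_is_join fg_adj (spatialL.2 a)) xfa.
by exists (exist _ s cji_s).
Qed.

Lemma cji_below_g (a : L) : cji_below (g a) = down_tri cji_rel (cji_below a).
Proof.
apply/seteqP; split=> [x xga y yfx | x x_down].
  exact: le_trans yfx (proj2 (fg_adj (sval x) a) xga).
by apply/(proj1 (fg_adj (sval x) a)); apply: le_of_cji_below.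
Qed.

Lemma cji_below0 : cji_below \bot = set0.
Proof.
apply/seteqP; split=> // x x0.
have join0 : is_join set0 (sval x) by split=> // u _; apply: le_trans x0 (le0x u).
exact: svalP x _ join0.
Qed.

Lemma cji_below1 : cji_below \top = setT.
Proof. by apply/seteqP; split=> // x _; apply: lex1. Qed.

Lemma cji_below_HGC_iso : HGC_iso imp f g cji_le cji_rel cji_below.
Proof.
repeat split.
- exact: cji_below_upset.
- exact: cji_below_inj.
- exact: cji_below_onto.
- exact: cji_belowU.
- exact: cji_belowI.
- exact: cji_below_imp.
- exact: cji_below_f.
- exact: cji_below_g.
- exact: cji_below0.
- exact: cji_below1.
Qed.

End CanonicalFrame.

Theorem theorem4p2 (d : Order.disp_t) (L : tbLatticeType d)
  (imp : L -> L -> L) (f g : L -> L) :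
  HGC_algebra imp f g -> spatial (L := L) ->
  exists (X : Type) (le R : X -> X -> Prop),
    GC_frame le R /\ exists phi : L -> set X, HGC_iso imp f g le R phi.
Proof.
move=> [imp_adj fg_adj] spatialL.
exists cji_point, cji_le, (cji_rel f); split; first exact: cji_GC_frame fg_adj.
by exists cji_below; apply: cji_below_HGC_iso.
Qed.
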